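(* Let $\mathbb{F}\in\{\mathbb{R},\mathbb{C}\}$, $M>N\ge1$, $M\ge 2$, and let $\mathcal{P}(M,N)$ be the set of Parseval frames for $\mathbb{F}^N$ with $M$ vectors. For $\Phi=\{\varphi_i\}_{i=1}^M\in\mathcal{P}(M,N)$ define $$EAD(\Phi)=\sum_{i=1}^M\Big(\|\varphi_i\|^2-\frac{N}{M}\Big)^2+\sum_{i\neq j}\big(|\langle\varphi_i,\varphi_j\rangle|-c_{M,N}\big)^2,\qquad c_{M,N}=\sqrt{\frac{N(M-N)}{M^2(M-1)}},$$ $$V(\Phi)=\sum_{i=1}^M\Big(\|\varphi_i\|^2-\frac{N}{M}\Big)^2+\sum_{i\neq j}\big(|\langle\varphi_i,\varphi_j\rangle|-c_\Phi\big)^2,\qquad c_\Phi=\frac{TC(\Phi)}{M(M-1)}.$$ Then the following three optimization problems have the same set of solutions: maximizing $TC(\Phi)$ over $\mathcal{P}(M,N)$; minimizing $EAD(\Phi)$ over $\mathcal{P}(M,N)$; minimizing $V(\Phi)$ over $\mathcal{P}(M,N)$.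
   Context: A Parseval frame for $\mathbb{F}^N$ is a family $\{\varphi_i\}_{i=1}^M\subseteq\mathbb{F}^N$ whose $N\times M$ matrix $\Phi$ (columns $\varphi_i$) satisfies $\Phi\Phi^*=I$. The total coherence is $TC(\Phi)=\sum_{i\neq j}|\langle\varphi_i,\varphi_j\rangle|$. *)

From HB Require Import structures.
From mathcomp Require Import all_boot all_order all_algebra.
From mathcomp Require Import reals.
From mathcomp.real_closed Require Import complex.

Set Implicit Arguments.
Unset Strict Implicit.
Unset Printing Implicit Defensive.

Import Order.TTheory GRing.Theory Num.Theory.
Local Open Scope ring_scope.

(* Generic setting: scalar field F (a numFieldType) together with its
   conjugation [cj] (identity for F = R, complex conjugation for F = C).
   A family {phi_i}_{i=1..M} in F^N is stored as the N x M matrix Phi whose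
   i-th column is phi_i.  All the quantities below take values in F; they
   are real (self-adjoint) values, and are compared with the order of F. *)
Section Frames.
Variables (F : numFieldType) (cj : F -> F).

Definition inner N M (Phi : 'M[F]_(N, M)) (i j : 'I_M) : F :=
  \sum_(k < N) Phi k i * cj (Phi k j).

Definition adjmx N M (Phi : 'M[F]_(N, M)) : 'M[F]_(M, N) :=
  \matrix_(i < M, k < N) cj (Phi k i).

Definition parseval N M (Phi : 'M[F]_(N, M)) : Prop :=
  Phi *m adjmx Phi = 1%:M.

Definition TC N M (Phi : 'M[F]_(N, M)) : F :=
  \sum_(i < M) \sum_(j < M | j != i) `|inner Phi i j|.

Definition sqnorm N M (Phi : 'M[F]_(N, M)) (i : 'I_M) : F := inner Phi i i.

Definition dev N M (c : F) (Phi : 'M[F]_(N, M)) : F :=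
  \sum_(i < M) (sqnorm Phi i - N%:R / M%:R) ^+ 2
  + \sum_(i < M) \sum_(j < M | j != i) (`|inner Phi i j| - c) ^+ 2.

Definition cPhi N M (Phi : 'M[F]_(N, M)) : F :=
  TC Phi / (M%:R * (M%:R - 1)).

Definition EAD N M (cMN : F) (Phi : 'M[F]_(N, M)) : F := dev cMN Phi.

Definition Vf N M (Phi : 'M[F]_(N, M)) : F := dev (cPhi Phi) Phi.

Definition is_max_on N M (f : 'M[F]_(N, M) -> F) (Phi : 'M[F]_(N, M)) : Prop :=
  parseval Phi /\ forall Psi : 'M[F]_(N, M), parseval Psi -> f Psi <= f Phi.

Definition is_min_on N M (f : 'M[F]_(N, M) -> F) (Phi : 'M[F]_(N, M)) : Prop :=
  parseval Phi /\ forall Psi : 'M[F]_(N, M), parseval Psi -> f Phi <= f Psi.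

Definition same_solutions N M (cMN : F) : Prop :=
  forall Phi : 'M[F]_(N, M),
    (is_max_on (@TC N M) Phi <-> is_min_on (EAD cMN) Phi) /\
    (is_min_on (EAD cMN) Phi <-> is_min_on (@Vf N M) Phi).

End Frames.

Definition cMN (R : realType) (N M : nat) : R :=
  Num.sqrt (N%:R * (M%:R - N%:R) / (M%:R ^+ 2 * (M%:R - 1))).

(** For a Parseval frame the Gram matrix G = Phi^* Phi is a
   rank-N projection, so tr G = tr G^2 = N: the squared norms sum to N and
   all squared inner products |<phi_i, phi_j>|^2 (diagonal included) sum to
   N as well.  Expanding the squares in the deviation functional therefore
   leaves, on Parseval frames,
     dev c Phi = N - N^2/M - 2 c TC(Phi) + c^2 M (M - 1),
   so EAD is a strictly decreasing affine function of TC (as c_{M,N} > 0)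
   and V = N - N^2/M - TC^2 / (M (M - 1)) is strictly decreasing in TC >= 0.
   Hence minimizing either one is the same as maximizing TC. *)
From HB Require Import structures.
From mathcomp Require Import all_boot all_order all_algebra.
From mathcomp Require Import reals.
From mathcomp.real_closed Require Import complex.
From mathcomp Require Import ring.
Import Order.TTheory GRing.Theory Num.Theory.
Local Open Scope ring_scope.

Lemma sumr_sqrB (R : comPzRingType) (I : finType) (P : pred I) (x : I -> R) (c : R) :
  \sum_(i | P i) (x i - c) ^+ 2 =
  \sum_(i | P i) x i ^+ 2 - (\sum_(i | P i) x i) * c *+ 2 + c ^+ 2 *+ #|P|.
Proof.
under eq_bigr do rewrite sqrrB.
by rewrite big_split sumrB /= sumrMnl -mulr_suml sumr_const.
Qed.

Section Conjugation.
Variables (F : numFieldType) (cj : F -> F).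
Hypothesis cjD : {morph cj : x y / x + y}.
Hypothesis cjM : {morph cj : x y / x * y}.
Hypothesis cjK : involutive cj.
Hypothesis sqr_normr_conj : forall x, `|x| ^+ 2 = x * cj x.

Lemma conj_sum (I : finType) (P : pred I) (f : I -> F) :
  cj (\sum_(i | P i) f i) = \sum_(i | P i) cj (f i).
Proof.
have cj0 : cj 0 = 0 by apply: (addrI (cj 0)); rewrite -cjD !addr0.
exact: big_morph.
Qed.

Variables (N M : nat).
Implicit Types Phi Psi : 'M[F]_(N, M).

Lemma is_max_on_iff_min_on {f g : 'M[F]_(N, M) -> F} :
  (forall Phi Psi, parseval cj Phi -> parseval cj Psi ->
     (f Phi <= f Psi) = (g Psi <= g Phi)) ->
  forall Phi, is_max_on cj g Phi <-> is_min_on cj f Phi.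
Proof.
move=> fg Phi; split=> -[PhiP extr]; split=> // Psi PsiP.
  by rewrite fg // extr.
by rewrite -fg // extr.
Qed.

Lemma inner_gram Phi i j : inner cj Phi i j = (adjmx cj Phi *m Phi) j i.
Proof. by rewrite mxE; apply: eq_bigr => k _; rewrite mxE mulrC. Qed.

Lemma conj_inner Phi i j : cj (inner cj Phi i j) = inner cj Phi j i.
Proof. by rewrite conj_sum; apply: eq_bigr => k _; rewrite cjM cjK mulrC. Qed.

Lemma sqr_normr_inner Phi i j :
  `|inner cj Phi i j| ^+ 2 = inner cj Phi i j * inner cj Phi j i.
Proof. by rewrite sqr_normr_conj conj_inner. Qed.

Lemma TC_ge0 Phi : 0 <= TC cj Phi.
Proof. by do 2!apply: sumr_ge0 => ? _. Qed.

Section Parseval.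
Variable Phi : 'M[F]_(N, M).
Hypothesis PhiP : parseval cj Phi.

Let G := adjmx cj Phi *m Phi.

Lemma gram_idem : G *m G = G.
Proof. by rewrite /G mulmxA -(mulmxA _ Phi) PhiP mulmx1. Qed.

Lemma trace_gram : \tr G = N%:R.
Proof. by rewrite /G mxtrace_mulC PhiP mxtrace1. Qed.

Lemma sum_sqnorm : \sum_i sqnorm cj Phi i = N%:R.
Proof. by rewrite -trace_gram; apply: eq_bigr => i _; rewrite /sqnorm inner_gram. Qed.

Lemma sum_sqnorm_sqr_inner :
  \sum_i sqnorm cj Phi i ^+ 2
  + \sum_i \sum_(j | j != i) `|inner cj Phi i j| ^+ 2 = N%:R.
Proof.
rewrite -big_split -trace_gram -[in RHS]gram_idem; apply: eq_bigr => i _ /=.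
rewrite mxE [RHS](bigD1 i) //= /G -!inner_gram expr2; congr (_ + _).
by apply: eq_bigr => j _; rewrite sqr_normr_inner mulrC -!inner_gram.
Qed.

Lemma dev_parseval c : (0 < M)%N ->
  dev cj c Phi = N%:R - N%:R ^+ 2 / M%:R - TC cj Phi * c *+ 2
                 + c ^+ 2 * (M%:R * (M%:R - 1)).
Proof.
move=> M_gt0; have M0 : (M%:R : F) != 0 by rewrite pnatr_eq0 -lt0n.
have offdiag : \sum_i \sum_(j | j != i) (`|inner cj Phi i j| - c) ^+ 2 =
  \sum_i (\sum_(j | j != i) `|inner cj Phi i j| ^+ 2
          - (\sum_(j | j != i) `|inner cj Phi i j|) * c *+ 2
          + c ^+ 2 * (M%:R - 1)).
  apply: eq_bigr => i _; rewrite sumr_sqrB cardC1 card_ord.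
  by rewrite -[c ^+ 2 *+ _]mulr_natr -subn1 natrB.
rewrite /dev (@sumr_sqrB _ _ predT) sum_sqnorm offdiag !big_split /=.
rewrite sumrN sumrMnl -mulr_suml sumr_const !card_ord -/(TC cj Phi).
have -> : \sum_i sqnorm cj Phi i ^+ 2 =
          N%:R - \sum_i \sum_(j | j != i) `|inner cj Phi i j| ^+ 2.
  by rewrite -sum_sqnorm_sqr_inner addrK.
by field.
Qed.

End Parseval.

Let offdiag_count := (M%:R * (M%:R - 1) : F).

Lemma offdiag_count_gt0 : (2 <= M)%N -> 0 < offdiag_count.
Proof.
by move=> M_ge2; rewrite mulr_gt0 ?subr_gt0 ?ltr1n ?ltr0n // ltnW.
Qed.

Lemma Vf_parseval Phi : (2 <= M)%N -> parseval cj Phi ->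
  Vf cj Phi = N%:R - N%:R ^+ 2 / M%:R - TC cj Phi ^+ 2 / offdiag_count.
Proof.
move=> M_ge2 PhiP; have count_gt0 := offdiag_count_gt0 M_ge2.
rewrite /Vf dev_parseval ?(ltnW M_ge2) // /cPhi -/offdiag_count.
by field; rewrite gt_eqF //= pnatr_eq0 gtn_eqF // ltnW.
Qed.

Lemma ler_EAD c : (2 <= M)%N -> 0 < c ->
  forall Phi Psi, parseval cj Phi -> parseval cj Psi ->
  (EAD cj c Phi <= EAD cj c Psi) = (TC cj Psi <= TC cj Phi).
Proof.
move=> M_ge2 c0 Phi Psi PhiP PsiP; have M_gt0 := ltnW M_ge2.
by rewrite /EAD !dev_parseval // lerD2r lerD2l lerN2 lerMn2r ler_pM2r.
Qed.

Lemma ler_Vf : (2 <= M)%N ->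
  forall Phi Psi, parseval cj Phi -> parseval cj Psi ->
  (Vf cj Phi <= Vf cj Psi) = (TC cj Psi <= TC cj Phi).
Proof.
move=> M_ge2 Phi Psi PhiP PsiP; have count_gt0 := offdiag_count_gt0 M_ge2.
rewrite !Vf_parseval // lerD2l lerN2 ler_pM2r ?invr_gt0 //.
by rewrite ler_sqr ?nnegrE ?TC_ge0.
Qed.

Theorem same_solutions_conj c : (2 <= M)%N -> 0 < c -> same_solutions cj N M c.
Proof.
move=> M_ge2 c0 Phi.
have TC_EAD := is_max_on_iff_min_on (ler_EAD c M_ge2 c0) Phi.
have TC_Vf := is_max_on_iff_min_on (ler_Vf M_ge2) Phi.
by split=> //; rewrite -TC_EAD.
Qed.

End Conjugation.

Lemma cMN_gt0 (R : realType) (N M : nat) : (0 < N < M)%N -> 0 < cMN R N M.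
Proof.
case/andP=> N_gt0 NM; have M_gt1 : (1 < M)%N by rewrite (leq_trans _ NM).
rewrite sqrtr_gt0 divr_gt0 // mulr_gt0 ?subr_gt0 ?ltr_nat ?ltr1n ?ltr0n //.
by rewrite exprn_gt0 // ltr0n ltnW.
Qed.

Theorem proposition5 (R : realType) (M N : nat) :
  (N < M)%N -> (1 <= N)%N -> (2 <= M)%N ->
  same_solutions (F := R) id N M (cMN R N M) /\
  same_solutions (F := R[i]) Num.conj N M ((cMN R N M)%:C)%C.
Proof.
move=> NM N_gt0 M_ge2.
have c0 : 0 < cMN R N M by apply: cMN_gt0; rewrite N_gt0.
split; apply: same_solutions_conj => //.
- by move=> x; rewrite real_normK ?num_real.
- exact: rmorphD.
- exact: rmorphM.
- exact: conjCK.
- exact: normCK.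
- by rewrite ltcR.
Qed.
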